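(* Let $f(x)\in\mathbb{F}_{q^n}[x]$ be a scattered polynomial such that $G_f^\circ$ is not isomorphic to $\mathbb{F}_q$. Then $f(x)$ is $\mathrm{GL}$-equivalent to a scattered polynomial $h(x)$ in standard form.
   Context: $q$ is a prime power, $n>1$. A $q$-polynomial $h(x)=\sum_{i=0}^{n-1}b_ix^{q^i}\in\mathbb{F}_{q^n}[x]$ is scattered if for all $y,z\in\mathbb{F}_{q^n}$, $zh(y)-yh(z)=0$ implies $y,z$ are $\mathbb{F}_q$-linearly dependent. $U_h=\{(x,h(x))\colon x\in\mathbb{F}_{q^n}\}$; nonsingular $A\in\mathbb{F}_{q^n}^{2\times2}$ acts by $(x,y)\mapsto(x,y)A$; $G_f=\{A\in\mathrm{GL}(2,q^n)\colon U_fA=U_f\}$ and $G_f^\circ=G_f\cup\{O\}$ ($O$ the zero matrix), which is a field under matrix operations. $f,g$ are $\mathrm{GL}$-equivalent if $U_fA=U_g$ for some $A\in\mathrm{GL}(2,q^n)$. With $\Delta_h=\{(i-j)\bmod n\colon b_ib_j\neq0,\ i\neq j\}\cup\{n\}$ and $t_h=\gcd(\Delta_h)$, $h$ is in standard form if $t_h>1$. *)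

From HB Require Import structures.
From mathcomp Require Import all_boot all_order all_algebra all_field.
Set Implicit Arguments. Unset Strict Implicit. Unset Printing Implicit Defensive.
Import GRing.Theory.
Local Open Scope ring_scope.

(* The field L plays the role of F_{q^n} (hypothesis #|L| = q^n in the theorem). *)
Section QPoly.
Variable L : finFieldType.
Variables q n : nat.

Definition qpoly_eval (b : 'I_n -> L) (x : L) : L :=
  \sum_(i < n) b i * x ^+ (q ^ i)%N.

Definition in_Fq (a : L) : bool := a ^+ q == a.

Definition Fq_dep (y z : L) : Prop :=
  exists a c : L, [/\ in_Fq a, in_Fq c, (a != 0) || (c != 0) & a * y + c * z = 0].

Definition scattered (b : 'I_n -> L) : Prop :=
  forall y z : L, z * qpoly_eval b y - y * qpoly_eval b z = 0 -> Fq_dep y z.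

Definition Uset (b : 'I_n -> L) : {set 'rV[L]_2} :=
  [set \row_(j < 2) (if j == ord0 then x else qpoly_eval b x) | x : L].

Definition Uact (U : {set 'rV[L]_2}) (A : 'M[L]_2) : {set 'rV[L]_2} :=
  [set u *m A | u in U].

Definition Gset (b : 'I_n -> L) : {set 'M[L]_2} :=
  [set A : 'M[L]_2 | (A \in unitmx) && (Uact (Uset b) A == Uset b)].

Definition Gcirc (b : 'I_n -> L) : {set 'M[L]_2} := 0 |: Gset b.

Definition GL_equiv (f h : 'I_n -> L) : Prop :=
  exists2 A : 'M[L]_2, A \in unitmx & Uact (Uset f) A = Uset h.

Definition Gcirc_iso_Fq (b : 'I_n -> L) : Prop :=
  exists phi : 'M[L]_2 -> L,
    [/\ {in Gcirc b &, forall A B, phi (A + B) = phi A + phi B},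
        {in Gcirc b &, forall A B, phi (A *m B) = phi A * phi B},
        phi 1%:M = 1 /\ {in Gcirc b &, injective phi},
        {in Gcirc b, forall A, in_Fq (phi A)} &
        forall a, in_Fq a -> exists2 A, A \in Gcirc b & phi A = a].

(* t_h = gcd of Delta_h = {(i-j) mod n : b_i b_j <> 0, i <> j} U {n} *)
Definition t_of (b : 'I_n -> L) : nat :=
  \big[gcdn/n]_(i < n) \big[gcdn/0%N]_(j < n | (b i * b j != 0) && (i != j))
     ((i + n - j) %% n)%N.

Definition standard_form (b : 'I_n -> L) : Prop := (1 < t_of b)%N.

End QPoly.

(* For n = 2, deleting the linear term of f (an equivalence) leaves a single
   monomial, which is in standard form.  For n > 2, a matrix B with U_f B in U_f
   is either 0 or invertible: otherwise the kernel and the image of the F_q-linear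
   map it induces on U_f would both be F_q-lines, while |U_f| = q^n > q^2.  Hence
   G_f acts freely on U_f minus 0, so every A in G_f satisfies A^(q^n) = A and has
   an eigenvalue lam in F_(q^n); lam is not in F_q when A is not an F_q-scalar,
   and such an A exists because G_f° is not F_q.  Taking an eigenvector as second
   basis vector turns f into an equivalent h with h(a y) = c y + lam h(y), so
   h_i (a^(q^i) - lam) = 0 for i > 0.  Once the linear term is deleted, all
   exponents i that remain satisfy a^(q^i) = lam, hence are congruent modulo the
   length r > 1 of the Frobenius orbit of a, and r divides t_h. *)

From mathcomp Require Import all_boot all_order all_algebra all_field.
From mathcomp Require Import all_fingroup cyclic ring.
Set Implicit Arguments. Unset Strict Implicit. Unset Printing Implicit Defensive.
Import GRing.Theory.
Local Open Scope ring_scope.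

Lemma order_dvd_card_free (T : finType) (s : {perm T}) (S : {set T}) :
  (forall x, (s x \in S) = (x \in S)) ->
  (forall i x, x \in S -> (s ^+ i)%g x = x -> (s ^+ i)%g = 1%g) ->
  (#[s]%g %| #|S|)%N.
Proof.
move=> sS free.
have sXS i x : ((s ^+ i)%g x \in S) = (x \in S).
  by elim: i => [|i IH]; rewrite ?expg0 ?perm1 // expgSr permM sS IH.
have actsS : [acts <[s]>%g, on S | 'P].
  apply/subsetP => _ /cycleP [i ->]; rewrite !inE; apply/subsetP => x.
  by rewrite !inE /= apermE sXS.
rewrite -(acts_sum_card_orbit actsS); apply: dvdn_sum => _ /imsetP [x xS ->].
rewrite /order -(card_orbit_stab 'P <[s]>%G x).
suff -> : 'C_<[s]>[x | 'P]%g = 1%g by rewrite cards1 muln1.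
apply/trivgP/subsetP => _ /setIP [/cycleP [i ->]].
by move/astab1P => /(free i x xS) ->; rewrite inE.
Qed.

Lemma eigenvalue_of_expn_card (F : finFieldType) m (A : 'M[F]_m.+1) :
  A ^+ #|F| = A -> exists lam : F, \det (A - lam%:M) = 0.
Proof.
move=> AF; have : horner_mx A ('X^#|F| - 'X) = 0.
  by rewrite rmorphB /= rmorphXn /= horner_mx_X AF subrr.
rewrite finField_genPoly rmorph_prod /= => /(congr1 determinant).
rewrite (big_morph _ (@detM _ _) (@det1 _ _)) det0 => /eqP /prodf_eq0 [lam _ /eqP].
by rewrite rmorphB /= horner_mx_X horner_mx_C; exists lam.
Qed.

Lemma leq_card_img_ker (V W : finZmodType) (g : V -> W) : {morph g : x y / x - y} ->
  (#|V| <= #|[set g x | x in V]| * #|[set x | g x == 0%R]|)%N.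
Proof.
move=> gB.
pose s y := odflt 0 [pick z | g z == y].
have gs x : g (s (g x)) = g x.
  by rewrite /s; case: pickP => [z /eqP //|/(_ x)]; rewrite eqxx.
have split_inj : injective (fun x => (g x, x - s (g x))).
  by move=> x y [gxy]; rewrite gxy => /addIr.
rewrite -cardsX -(card_imset _ split_inj); apply/subset_leq_card/subsetP.
move=> _ /imsetP [x _ ->]; rewrite !inE /= imset_f //=.
by rewrite gB gs subrr.
Qed.

Section TwoByTwo.
Variable R : comNzRingType.

Definition rv (x y : R) : 'rV[R]_2 := \row_(j < 2) (if j == ord0 then x else y).

Definition mx2 (r1 r2 : 'rV[R]_2) : 'M[R]_2 :=
  \matrix_(i < 2, j < 2) (if i == 0 then r1 0 j else r2 0 j).

Lemma rv0 x y : rv x y 0 0 = x. Proof. by rewrite mxE. Qed.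
Lemma rv1 x y : rv x y 0 1 = y. Proof. by rewrite mxE. Qed.

Lemma rv_inj x y x' y' : rv x y = rv x' y' -> x = x' /\ y = y'.
Proof. by move=> e; split; [rewrite -(rv0 x y) e rv0 | rewrite -(rv1 x y) e rv1]. Qed.

Lemma rv_eta (v : 'rV[R]_2) : v = rv (v 0 0) (v 0 1).
Proof. by apply/rowP => -[[|[|]]] // j; rewrite mxE; congr (v 0 _); apply: val_inj. Qed.

Lemma rv00 : rv 0 0 = 0.
Proof. by apply/rowP => j; rewrite !mxE if_same. Qed.

Lemma rvB x y x' y' : rv x y - rv x' y' = rv (x - x') (y - y').
Proof. by apply/rowP => j; rewrite !mxE; case: ifP. Qed.

Lemma rvZ a x y : a *: rv x y = rv (a * x) (a * y).
Proof. by apply/rowP => j; rewrite !mxE; case: ifP. Qed.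

Lemma rv_mulE x y (M : 'M[R]_2) j : (rv x y *m M) 0 j = x * M 0 j + y * M 1 j.
Proof.
rewrite mxE !big_ord_recl big_ord0 !mxE /= addr0.
by congr (_ * M _ _ + _ * M _ _); apply: val_inj.
Qed.

Lemma rv_mul x y (M : 'M[R]_2) :
  rv x y *m M = rv (x * M 0 0 + y * M 1 0) (x * M 0 1 + y * M 1 1).
Proof. by rewrite [LHS]rv_eta !rv_mulE. Qed.

Lemma mx2_mul r1 r2 (M : 'M[R]_2) : mx2 r1 r2 *m M = mx2 (r1 *m M) (r2 *m M).
Proof.
apply/matrixP => i j; rewrite !mxE; case: ifP => i0;
  by apply: eq_bigr => l _; rewrite mxE i0.
Qed.

Lemma mx2_0 : mx2 0 0 = 0.
Proof. by apply/matrixP => i j; rewrite !mxE if_same. Qed.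

Lemma det_mx2 a b c d : \det (mx2 (rv a b) (rv c d)) = a * d - b * c.
Proof.
rewrite (expand_det_row _ 0) !big_ord_recl big_ord0 /cofactor !det_mx11 !mxE /=.
by rewrite expr0 expr1 !mul1r mulN1r mulrN addr0.
Qed.

End TwoByTwo.

Lemma unitmx_row1 (F : fieldType) (v : 'rV[F]_2) :
  v != 0 -> exists2 Q : 'M[F]_2, Q \in unitmx & rv 0 1 *m Q = v.
Proof.
rewrite [v]rv_eta; move: (v 0 0) (v 0 1) => a b vnz.
have [a0|anz] := eqVneq a 0.
  exists (mx2 (rv 1 0) (rv a b)); last by rewrite rv_mul !mxE /= !mul0r !mul1r !add0r.
  rewrite unitmxE unitfE det_mx2 a0 mul1r mul0r subr0.
  by apply: contraNneq vnz => ->; rewrite a0 rv00.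
exists (mx2 (rv 0 1) (rv a b)); last by rewrite rv_mul !mxE /= !mul0r !mul1r !add0r.
by rewrite unitmxE unitfE det_mx2 mul0r mul1r sub0r oppr_eq0.
Qed.

Section QPolynomials.
Variable L : finFieldType.
Variables q n : nat.
Hypothesis q_pchar : [pchar L].-nat q.
Hypothesis n_gt1 : (1 < n)%N.
Hypothesis card_L : #|L| = (q ^ n)%N.

Implicit Types f g h b : 'I_n -> L.

Local Notation frob m x := (x ^+ (q ^ m)%N).

Lemma n_gt0 : (0 < n)%N. Proof. exact: ltnW n_gt1. Qed.

Lemma q_gt1 : (1 < q)%N.
Proof.
have := card_finNzRing_gt1 L; rewrite card_L.
by case: q => [|[|]] //; rewrite ?exp1n // exp0n // n_gt0.
Qed.

Lemma frobD m (x y : L) : frob m (x + y) = frob m x + frob m y.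
Proof. by apply: exprDn_pchar; rewrite pnatX q_pchar. Qed.

Lemma frobB m (x y : L) : frob m (x - y) = frob m x - frob m y.
Proof. by apply/(addIr (frob m y)); rewrite -frobD subrK addrNK. Qed.

Lemma frob0 m : frob m (0 : L) = 0.
Proof. by rewrite expr0n expn_eq0 (gtn_eqF (ltnW q_gt1)). Qed.

Lemma frobN m (x : L) : frob m (- x) = - frob m x.
Proof. by rewrite -sub0r frobB frob0 sub0r. Qed.

Lemma frob_add m1 m2 (x : L) : frob (m1 + m2) x = frob m2 (frob m1 x).
Proof. by rewrite expnD exprM. Qed.

Lemma frobn (x : L) : frob n x = x.
Proof. by rewrite -card_L expf_card. Qed.

Lemma frob_mod m (x : L) : frob m x = frob (m %% n) x.
Proof.
rewrite {1}(divn_eq m n) frob_add; congr (_ ^+ _).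
by elim: (m %/ n)%N => [|s IH]; rewrite ?expr1 // mulSn frob_add frobn IH.
Qed.

Lemma frob_Fq m (a : L) : in_Fq q a -> frob m a = a.
Proof.
move/eqP=> aq; elim: m => [|m IH]; first by rewrite expr1.
by rewrite expnSr exprM IH.
Qed.

Lemma Fq_depP (y z : L) : y != 0 -> Fq_dep q y z -> exists2 mu, in_Fq q mu & z = mu * y.
Proof.
move=> ynz [a [c [aq cq ac0 /eqP]]]; rewrite addr_eq0 => /eqP acyz.
have cnz : c != 0.
  apply: contraTneq ac0 => c0; move/eqP: acyz; rewrite c0 mul0r oppr0 mulf_eq0.
  by rewrite (negbTE ynz) orbF => /eqP ->; rewrite eqxx.
exists (- (a / c)); last by rewrite mulNr mulrAC acyz mulNr opprK mulrAC divff ?mul1r.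
by rewrite /in_Fq -[q]expn1 frobN exprMn exprVn expn1 (eqP aq) (eqP cq).
Qed.

Lemma card_Fq_dep (S : {set L}) :
  {in S &, forall y z, Fq_dep q y z} -> (#|S| <= q)%N.
Proof.
move=> Sdep; case: (pickP (fun s => (s \in S) && (s != 0))) => [s0 /andP [s0S s0nz]|S0].
  pose Fq := [set a : L | in_Fq q a].
  have card_Fq : (#|Fq| <= q)%N.
    have sizeP : size ('X^q - 'X : {poly L}) = q.+1.
      by rewrite size_polyDl ?size_polyXn // size_polyN size_polyX ltnS q_gt1.
    have P0 : 'X^q - 'X != 0 :> {poly L} by rewrite -size_poly_eq0 sizeP.
    rewrite cardE -ltnS -sizeP max_poly_roots ?enum_uniq //; apply/allP => a.
    by rewrite mem_enum inE /root !hornerE => /eqP ->; rewrite subrr.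
  apply: leq_trans card_Fq; apply: leq_trans (leq_imset_card (fun mu => mu * s0) _).
  apply/subset_leq_card/subsetP => s sS.
  by have [mu muq ->] := Fq_depP s0nz (Sdep _ _ s0S sS); apply: imset_f; rewrite inE.
apply: leq_trans (ltnW q_gt1); apply/card_le1_eqP => y z yS zS.
by move: (S0 y) (S0 z); rewrite yS zS => /negbFE/eqP -> /negbFE/eqP ->.
Qed.

Local Notation qp b := (qpoly_eval q b).

Lemma qpD b x y : qp b (x + y) = qp b x + qp b y.
Proof. by rewrite /qpoly_eval -big_split; apply: eq_bigr => i _; rewrite frobD mulrDr. Qed.

Lemma qpB b x y : qp b (x - y) = qp b x - qp b y.
Proof. by rewrite /qpoly_eval -sumrB; apply: eq_bigr => i _; rewrite frobB mulrBr. Qed.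

Lemma qp0 b : qp b 0 = 0.
Proof. by move: (qpB b 0 0); rewrite !subrr. Qed.

Lemma qpZ b a x : in_Fq q a -> qp b (a * x) = a * qp b x.
Proof.
move=> aq; rewrite /qpoly_eval mulr_sumr; apply: eq_bigr => i _.
by rewrite exprMn (frob_Fq _ aq) mulrCA.
Qed.

Definition i0 : 'I_n := Ordinal n_gt0.

Lemma sum_delta (m : 'I_n) (c x : L) :
  \sum_(i < n) (if m == i then c else 0) * frob i x = c * frob m x.
Proof.
by rewrite (bigD1 m) //= eqxx big1 ?addr0 // => i; rewrite eq_sym => /negbTE ->; rewrite mul0r.
Qed.

Lemma qpoly_coef_eq0 b : qp b =1 (fun=> 0) -> forall i, b i = 0.
Proof.
move=> b0; pose P : {poly L} := \poly_(m < q ^ n) (\sum_(i < n) if (q ^ i == m)%N then b i else 0).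
have qX_lt (i : 'I_n) : (q ^ i < q ^ n)%N by rewrite ltn_exp2l ?q_gt1.
have hornerP x : P.[x] = qp b x.
  rewrite horner_poly; under eq_bigr => m _ do rewrite mulr_suml.
  rewrite exchange_big; apply: eq_bigr => i _.
  rewrite (bigD1 (Ordinal (qX_lt i))) //= eqxx big1 ?addr0 // => m.
  by rewrite -val_eqE /= eq_sym => /negbTE ->; rewrite mul0r.
have P0 : P = 0.
  apply/eqP; apply: contraT => nzP.
  have /(max_poly_roots nzP) : all (root P) (enum L).
    by apply/allP => x _; rewrite /root hornerP b0.
  by rewrite enum_uniq -cardE card_L => /(_ isT); rewrite ltnNge size_poly.
move=> i; have := congr1 (fun P : {poly L} => P`_(q ^ i)) P0.
rewrite coef_poly qX_lt coef0 -big_mkcond /= => <-.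
by rewrite (eq_bigl (pred1 i)) ?big_pred1_eq // => j; rewrite /= eqn_exp2l ?q_gt1.
Qed.

Definition is_qpoly (g : L -> L) := exists b : 'I_n -> L, g =1 qp b.

Lemma is_qpoly_id : is_qpoly id.
Proof.
by exists (fun i => if i0 == i then 1 else 0) => x; rewrite /qpoly_eval sum_delta mul1r expr1.
Qed.

Lemma is_qpoly_lin b (c d : L) : is_qpoly (fun x => c * x + d * qp b x).
Proof.
exists (fun i => d * b i + (if i0 == i then c else 0)) => x.
rewrite /qpoly_eval; under [RHS]eq_bigr => i _ do rewrite mulrDl.
rewrite big_split /= sum_delta expr1 mulr_sumr addrC.
by congr (_ + _); apply: eq_bigr => i _; rewrite mulrA.
Qed.

Lemma is_qpoly_comp (g1 g2 : L -> L) : is_qpoly g1 -> is_qpoly g2 -> is_qpoly (g1 \o g2).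
Proof.
move=> [b g1E] [c g2E].
exists (fun m => \sum_(i < n) \sum_(j < n)
   (if Ordinal (ltn_pmod (i + j) n_gt0) == m then b i * frob i (c j) else 0)) => x.
rewrite /= g1E g2E /qpoly_eval; under [RHS]eq_bigr => m _ do rewrite mulr_suml.
rewrite exchange_big; apply: eq_bigr => i _ /=.
under [RHS]eq_bigr => m _ do rewrite mulr_suml.
rewrite exchange_big (big_morph _ (frobD i) (frob0 i)) mulr_sumr; apply: eq_bigr => j _.
by rewrite sum_delta /= -frob_mod addnC frob_add exprMn mulrA.
Qed.

Lemma is_qpoly_iter (g : L -> L) m : is_qpoly g -> is_qpoly (iter m g).
Proof.
move=> qg; elim: m => [|m [b IH]] /=; first exact: is_qpoly_id.
by have [c cE] := is_qpoly_comp qg (ex_intro _ b IH); exists c.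
Qed.

Lemma is_qpoly_inv (g : L -> L) (g_inj : injective g) : is_qpoly g ->
  exists2 g' : L -> L, is_qpoly g' & cancel g g' /\ cancel g' g.
Proof.
move=> qg; pose s := perm g_inj.
(* The inverse of a permutation of a finite set is one of its powers. *)
have /cycleP [m sVE] : (s^-1)%g \in <[s]>%g by rewrite groupV cycle_id.
exists (s^-1)%g; last first.
  by split=> x; [rewrite -[g x](permE g_inj) permK | rewrite -(permE g_inj) permKV].
have [b bE] := is_qpoly_iter m qg; exists b => x.
by rewrite sVE permX -bE; apply: eq_iter => y; rewrite permE.
Qed.

Lemma frob_order (a : L) : ~~ in_Fq q a ->
  exists r, [/\ (1 < r)%N, (r %| n)%N & forall m, frob m a = a -> (r %| m)%N].
Proof.
move=> aNq; have fixed_n : exists m, (0 < m)%N && (frob m a == a).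
  by exists n; rewrite n_gt0 frobn eqxx.
case: (ex_minnP fixed_n) => r /andP [r_gt0 /eqP ar] r_min.
have ar_mul s : frob (s * r) a = a.
  by elim: s => [|s IH]; rewrite ?expr1 // mulSn frob_add ar IH.
have r_dvd m : frob m a = a -> (r %| m)%N.
  move=> am; rewrite /dvdn; apply: contraTT (ltn_pmod m r_gt0) => mr_neq0.
  rewrite -leqNgt r_min // lt0n mr_neq0 /=.
  by move: am; rewrite {1}(divn_eq m r) frob_add ar_mul => ->.
exists r; split; [|exact/r_dvd/frobn | exact: r_dvd].
rewrite ltn_neqAle eq_sym r_gt0 andbT.
by apply: contraNneq aNq => r1; rewrite /in_Fq -[q]expn1 -r1 ar.
Qed.

Lemma t_of_dvdn b : (t_of b %| n)%N.
Proof. by apply: (big_rec (dvdn^~ n)) => // i x _; apply/dvdn_trans/dvdn_gcdr. Qed.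

Lemma standard_form_of_dvdn b r : (1 < r)%N -> (r %| n)%N ->
  (forall i j : 'I_n, b i * b j != 0 -> i != j -> (r %| (i + n - j) %% n)%N) ->
  standard_form b.
Proof.
move=> r_gt1 r_dvd_n r_dvd; have r_dvd_t : (r %| t_of b)%N.
  apply: (big_ind (dvdn r)) => // [x y|i _]; first by rewrite dvdn_gcd => -> ->.
  apply: (big_ind (dvdn r)) => // [x y|j /andP [bij ij]]; first by rewrite dvdn_gcd => -> ->.
  exact: r_dvd.
exact: leq_trans r_gt1 (dvdn_leq (dvdn_gt0 n_gt0 (t_of_dvdn b)) r_dvd_t).
Qed.

Lemma standard_form_of_frob_eq b (a lam : L) : ~~ in_Fq q lam ->
  (forall i, b i != 0 -> frob i a = lam) -> standard_form b.
Proof.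
move=> lamNq b_frob; have [aq|aNq] := boolP (in_Fq q a).
  apply: (standard_form_of_dvdn n_gt1 (dvdnn n)) => i j; rewrite mulf_eq0 negb_or.
  by case/andP => /b_frob; rewrite frob_Fq // => lamE; rewrite -lamE aq in lamNq.
have [r [r_gt1 r_dvd_n r_dvd]] := frob_order aNq.
apply: (standard_form_of_dvdn r_gt1 r_dvd_n) => i j; rewrite mulf_eq0 negb_or.
case/andP => /b_frob ai /b_frob aj _; apply: r_dvd.
rewrite -frob_mod -addnBA 1?ltnW // frob_add ai -aj -frob_add subnKC 1?ltnW ?frobn //.
Qed.

Definition pt b (x : L) : 'rV[L]_2 := rv x (qp b x).

Lemma pt_inj b : injective (pt b).
Proof. by move=> x y /rv_inj []. Qed.

Lemma pt00 b x : pt b x 0 0 = x.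
Proof. exact: rv0. Qed.

Lemma ptD b x y : pt b x + pt b y = pt b (x + y).
Proof. by apply/rowP => j; rewrite !mxE qpD; case: ifP. Qed.

Lemma ptB b x y : pt b x - pt b y = pt b (x - y).
Proof. by rewrite /pt rvB qpB. Qed.

Lemma pt0 b : pt b 0 = 0.
Proof. by rewrite /pt qp0 rv00. Qed.

Lemma ptZ b a x : in_Fq q a -> a *: pt b x = pt b (a * x).
Proof. by move=> aq; rewrite /pt rvZ qpZ. Qed.

Lemma det_pt b y z : \det (mx2 (pt b y) (pt b z)) = - (z * qp b y - y * qp b z).
Proof. by rewrite det_mx2; ring. Qed.

Definition Umaps f h (M : 'M[L]_2) := forall x, exists y, pt f x *m M = pt h y.

Lemma Umaps_mul f g h M N : Umaps f g M -> Umaps g h N -> Umaps f h (M *m N).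
Proof.
by move=> fg gh x; have [y xy] := fg x; have [z yz] := gh y; exists z; rewrite mulmxA xy yz.
Qed.

Lemma Uact_Uset f h M : M \in unitmx -> Umaps f h M -> Uact (Uset q f) M = Uset q h.
Proof.
move=> Munit fh; apply/eqP; rewrite eqEcard; apply/andP; split.
  apply/subsetP => _ /imsetP [_ /imsetP [x _ ->] ->].
  by have [y xy] := fh x; rewrite [_ *m M]xy; apply: imset_f.
by rewrite !card_imset //; [exact: pt_inj | exact: can_inj (mulmxK Munit) | exact: pt_inj].
Qed.

Lemma Uset_Umaps f h M : Uact (Uset q f) M = Uset q h -> Umaps f h M.
Proof.
move=> fMh x; have : pt f x *m M \in Uact (Uset q f) M by apply/imset_f/imset_f.
by rewrite fMh => /imsetP [y _ ->]; exists y.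
Qed.

Lemma GL_equivE f h : GL_equiv q f h <-> exists2 M, M \in unitmx & Umaps f h M.
Proof.
split=> [[M Munit /Uset_Umaps]|[M Munit /(Uact_Uset Munit)]]; by exists M.
Qed.

Lemma Umaps_inv f h M : M \in unitmx -> Umaps f h M -> Umaps h f (invmx M).
Proof.
move=> Munit /(Uact_Uset Munit) fMh y; have : pt h y \in Uset q h by apply: imset_f.
by rewrite -fMh => /imsetP [_ /imsetP [x _ ->] ->]; exists x; rewrite mulmxK.
Qed.

Lemma GL_equiv_sym f h : GL_equiv q f h -> GL_equiv q h f.
Proof.
move=> /GL_equivE [M Munit fh]; apply/GL_equivE.
by exists (invmx M); [rewrite unitmx_inv | exact: Umaps_inv].
Qed.

Lemma GL_equiv_trans f g h : GL_equiv q f g -> GL_equiv q g h -> GL_equiv q f h.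
Proof.
move=> /GL_equivE [M Munit fg] /GL_equivE [N Nunit gh]; apply/GL_equivE.
by exists (M *m N); [rewrite unitmx_mul Munit | apply: Umaps_mul fg gh].
Qed.

Lemma scattered_det f y z :
  scattered q f -> \det (mx2 (pt f y) (pt f z)) = 0 -> Fq_dep q y z.
Proof. by move=> fsc; rewrite det_pt => /eqP; rewrite oppr_eq0 => /eqP /fsc. Qed.

Lemma scattered_GL_equiv f h : GL_equiv q f h -> scattered q f -> scattered q h.
Proof.
move=> /GL_equiv_sym /GL_equivE [M Munit hf] fsc y z yz0.
have [[y' yM] [z' zM]] := (hf y, hf z).
have [a [c [aq cq ac0 acyz]]] : Fq_dep q y' z'.
  apply: (scattered_det fsc); rewrite -yM -zM -mx2_mul det_mulmx det_pt yz0.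
  by rewrite oppr0 mul0r.
exists a, c; split => //.
have /(canRL (mulmxK Munit)) : (a *: pt h y + c *: pt h z) *m M = 0.
  by rewrite mulmxDl -!scalemxAl yM zM !ptZ // ptD acyz pt0.
by rewrite mul0mx => /(congr1 (fun v : 'rV[L]_2 => v 0 0)); rewrite !mxE.
Qed.

Lemma scattered_scale_Fq f (z z' lam : L) :
  scattered q f -> z != 0 -> lam *: pt f z = pt f z' -> in_Fq q lam.
Proof.
move=> fsc znz; rewrite /pt rvZ => /rv_inj [<- homog].
have [|mu muq /mulIf] := Fq_depP znz (fsc z (lam * z) _); last by move=> /(_ znz) ->.
by rewrite -homog; ring.
Qed.

Definition drop_coef0 b : 'I_n -> L := fun i => if i == i0 then 0 else b i.

Lemma GL_equiv_drop_coef0 b : GL_equiv q b (drop_coef0 b).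
Proof.
apply/GL_equivE; exists (mx2 (rv 1 (- b i0)) (rv 0 1)).
  by rewrite unitmxE unitfE det_mx2 mulr1 mulr0 subr0 oner_neq0.
move=> x; exists x; rewrite /pt rv_mul !mxE /=; congr rv; first by ring.
have -> : qp (drop_coef0 b) x = qp b x - b i0 * x.
  rewrite /qpoly_eval (bigD1 i0) //= [in RHS](bigD1 i0) //= /drop_coef0 eqxx.
  rewrite mul0r add0r expr1 addrAC subrr add0r; apply: eq_bigr => i /negbTE ->.
  done.
by ring.
Qed.

Lemma change_basis f (P : 'M[L]_2) : injective (fun x => (pt f x *m P) 0 0) ->
  exists h, forall x, pt f x *m P = pt h ((pt f x *m P) 0 0).
Proof.
move=> psi_inj; pose coord j x := (pt f x *m P) 0 j.
have coord_qpoly j : is_qpoly (coord j).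
  have [b bE] := is_qpoly_lin f (P 0 j) (P 1 j); exists b => x.
  by rewrite -bE /coord /pt rv_mulE mulrC [qp f x * _]mulrC.
have [psi' psi'_qpoly [psiK _]] := is_qpoly_inv psi_inj (coord_qpoly 0).
have [h hE] := is_qpoly_comp (coord_qpoly 1) psi'_qpoly.
by exists h => x; rewrite [LHS]rv_eta /pt -hE /= -/(coord 0 x) psiK.
Qed.

Lemma Umaps_scalar f a : in_Fq q a -> Umaps f f a%:M.
Proof. by move=> aq x; exists (a * x); rewrite mul_mx_scalar ptZ. Qed.

Lemma UmapsB f B C : Umaps f f B -> Umaps f f C -> Umaps f f (B - C).
Proof.
by move=> fB fC x; have [[y xy] [z xz]] := (fB x, fC x); exists (y - z); rewrite mulmxBr xy xz ptB.
Qed.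

Lemma UmapsX f B i : Umaps f f B -> Umaps f f (B ^+ i).
Proof.
move=> fB; elim: i => [|i IH]; first by rewrite expr0; apply/Umaps_scalar/eqP/expr1n.
by rewrite exprS; apply: Umaps_mul.
Qed.

Lemma Umaps_pt f B x : Umaps f f B -> pt f x *m B = pt f ((pt f x *m B) 0 0).
Proof. by move=> fB; have [y ->] := fB x; rewrite pt00. Qed.

Lemma Umaps_triangular_coef h B : Umaps h h B -> B 1 0 = 0 ->
  forall i, i != i0 -> h i * (frob i (B 0 0) - B 1 1) = 0.
Proof.
move=> hB B10 i ii0.
have homog y : qp h (B 0 0 * y) = B 0 1 * y + B 1 1 * qp h y.
  have [y' yB] := hB y; move: yB; rewrite /pt rv_mul B10 mulr0 addr0 => /rv_inj [y'E].
  by rewrite [B 0 0 * y]mulrC y'E => <-; rewrite mulrC [B 1 1 * _]mulrC.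
pose c j := h j * frob j (B 0 0) - B 1 1 * h j - (if i0 == j then B 0 1 else 0).
have c0 : qp c =1 (fun=> 0).
  move=> y; rewrite /qpoly_eval; under eq_bigr => j _ do rewrite !mulrBl.
  rewrite !sumrB sum_delta expr1.
  have -> : \sum_j h j * frob j (B 0 0) * frob j y = qp h (B 0 0 * y).
    by apply: eq_bigr => j _; rewrite exprMn mulrA.
  have -> : \sum_j B 1 1 * h j * frob j y = B 1 1 * qp h y.
    by rewrite mulr_sumr; apply: eq_bigr => j _; rewrite mulrA.
  by rewrite homog; ring.
have := qpoly_coef_eq0 c0 i; rewrite /c eq_sym (negbTE ii0) subr0 => <-.
by rewrite mulrBr [h i * B 1 1]mulrC.
Qed.

Section Stabilizer.
Variable f : 'I_n -> L.
Hypothesis f_scattered : scattered q f.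
Hypothesis n_gt2 : (2 < n)%N.

Lemma Umaps_singular_eq0 B : Umaps f f B -> \det B = 0 -> B = 0.
Proof.
move=> fB detB0; apply/eqP; apply: contraT => Bnz.
pose g x := (pt f x *m B) 0 0.
have gE x : pt f x *m B = pt f (g x) := Umaps_pt x fB.
have img_dep : {in [set g x | x in L] &, forall y z, Fq_dep q y z}.
  move=> _ _ /imsetP [x1 _ ->] /imsetP [x2 _ ->]; apply: (scattered_det f_scattered).
  by rewrite -!gE -mx2_mul det_mulmx detB0 mulr0.
have ker_dep : {in [set x | g x == 0] &, forall y z, Fq_dep q y z}.
  move=> x1 x2; rewrite !inE => /eqP gx1 /eqP gx2; apply: (scattered_det f_scattered).
  apply/eqP; apply: contraNT Bnz => /negPf detx.
  rewrite -(mulKmx (_ : mx2 (pt f x1) (pt f x2) \in unitmx) B); last by rewrite unitmxE unitfE detx.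
  by rewrite mx2_mul !gE gx1 gx2 pt0 mx2_0 mulmx0.
have gB : {morph g : x y / x - y} by move=> x y; rewrite /g -ptB mulmxBl !mxE.
have := leq_trans (leq_card_img_ker gB) (leq_mul (card_Fq_dep img_dep) (card_Fq_dep ker_dep)).
by rewrite card_L mulnn leq_exp2l ?q_gt1 // leqNgt n_gt2.
Qed.

Lemma Umaps_expn_card A : Umaps f f A -> A \in unitmx -> A ^+ #|L| = A.
Proof.
move=> fA Aunit; pose phi x := (pt f x *m A) 0 0.
have phiE x : pt f x *m A = pt f (phi x) := Umaps_pt x fA.
have phi_inj : injective phi.
  by move=> x y /(congr1 (pt f)); rewrite -!phiE => /(can_inj (mulmxK Aunit)) /pt_inj.
pose s := perm phi_inj.
have sXE i x : pt f x *m A ^+ i = pt f ((s ^+ i)%g x).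
  elim: i x => [|i IH] x; first by rewrite expr0 mulmx1 expg0 perm1.
  by rewrite exprSr -[_ * A]/(mulmx _ A) mulmxA IH expgSr permM permE phiE.
have pow_fix_eq1 i x : x != 0 -> (s ^+ i)%g x = x -> A ^+ i = 1.
  move=> xnz sx; apply/eqP; rewrite -subr_eq0; apply/eqP/Umaps_singular_eq0.
    by apply: UmapsB; [apply: UmapsX | apply/Umaps_scalar/eqP/expr1n].
  apply/eqP/det0P; exists (pt f x); last by rewrite mulmxBr sXE sx mulmx1 subrr.
  by apply: contraNneq xnz => /(congr1 (fun v : 'rV[L]_2 => v 0 0)); rewrite pt00 mxE => ->.
have phi0 : phi 0 = 0 by rewrite /phi pt0 mul0mx mxE.
have : (#[s]%g %| #|[set~ (0 : L)%R]|)%N.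
  apply: order_dvd_card_free => [x|i x]; first by rewrite !in_setC1 permE -{1}phi0 (inj_eq phi_inj).
  rewrite in_setC1 => xnz /(pow_fix_eq1 i x xnz) Ai.
  by apply/permP => y; rewrite perm1; apply: (@pt_inj f); rewrite -sXE Ai mulmx1.
rewrite cardsC1 order_dvdn => /eqP s1.
have A1 : A ^+ #|L|.-1 = 1 by apply: (pow_fix_eq1 _ 1); rewrite ?oner_eq0 // s1 perm1.
by rewrite -(prednK (ltnW (card_finNzRing_gt1 L))) exprSr A1 mul1r.
Qed.

Lemma Umaps_eigen A : Umaps f f A -> A \in unitmx -> (forall mu, in_Fq q mu -> A != mu%:M) ->
  exists lam, exists2 v : 'rV[L]_2, ~~ in_Fq q lam /\ v != 0 & v *m A = lam *: v.
Proof.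
move=> fA Aunit Anscalar.
have [lam /eqP /det0P [v vnz]] := eigenvalue_of_expn_card (Umaps_expn_card fA Aunit).
rewrite mulmxBr mul_mx_scalar => /eqP; rewrite subr_eq0 => /eqP vA.
exists lam, v => //; split=> //; apply/negP => lamq.
move: (Anscalar _ lamq); rewrite -subr_eq0 => /eqP; apply; apply: Umaps_singular_eq0.
  exact: UmapsB fA (Umaps_scalar f lamq).
by apply/eqP/det0P; exists v; rewrite // mulmxBr mul_mx_scalar vA subrr.
Qed.

Lemma eigen_first_coord_inj A lam (Q : 'M[L]_2) : Umaps f f A -> ~~ in_Fq q lam ->
  Q \in unitmx -> (rv 0 1 *m Q) *m A = lam *: (rv 0 1 *m Q) ->
  injective (fun x => (pt f x *m invmx Q) 0 0).
Proof.
(* A point of U_f with vanishing first coordinate in the new basis is a multiple of the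
   eigenvector, which scatteredness forbids. *)
move=> fA lamNq Qunit vA x y xy; apply/eqP; rewrite -subr_eq0; apply: contraNT lamNq.
have : (pt f (x - y) *m invmx Q) 0 0 = (pt f x *m invmx Q) 0 0 - (pt f y *m invmx Q) 0 0.
  by rewrite -ptB mulmxBl !mxE.
rewrite xy subrr; move: (x - y) => z psi0 znz.
have zQ : pt f z = (pt f z *m invmx Q) 0 1 *: (rv 0 1 *m Q).
  rewrite -{1}(mulmxKV Qunit (pt f z)) [pt f z *m _]rv_eta psi0 rv1.
  by rewrite scalemxAl rvZ mulr0 mulr1.
have [z' zA] := fA z; apply: (scattered_scale_Fq f_scattered znz (z' := z')).
by rewrite -zA zQ -scalemxAl vA scalerA mulrC -scalerA.
Qed.

Lemma nonscalar_standard_form A : A \in Gset q f -> (forall mu, in_Fq q mu -> A != mu%:M) ->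
  exists h, [/\ scattered q h, standard_form h & GL_equiv q f h].
Proof.
rewrite inE => /andP [Aunit /eqP /Uset_Umaps fA] Anscalar.
have [lam [v [lamNq vnz] vA]] := Umaps_eigen fA Aunit Anscalar.
have [Q Qunit Qv] := unitmx_row1 vnz; rewrite -Qv in vA.
have [h hE] := change_basis (eigen_first_coord_inj fA lamNq Qunit vA).
have fh : Umaps f h (invmx Q) by move=> x; exists ((pt f x *m invmx Q) 0 0).
have f_equiv_h : GL_equiv q f h by apply/GL_equivE; exists (invmx Q); rewrite ?unitmx_inv.
pose B := Q *m A *m invmx Q.
have hf : Umaps h f Q by rewrite -[Q]invmxK; apply: Umaps_inv (fh); rewrite unitmx_inv.
have hB : Umaps h h B := Umaps_mul (Umaps_mul hf fA) fh.
have [B10 B11] : B 1 0 = 0 /\ B 1 1 = lam.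
  have : rv 0 1 *m B = rv 0 lam by rewrite /B !mulmxA vA -scalemxAl mulmxK // rvZ mulr0 mulr1.
  by rewrite rv_mul !mul0r !mul1r !add0r => /rv_inj.
have f_equiv_h' := GL_equiv_trans f_equiv_h (GL_equiv_drop_coef0 h).
exists (drop_coef0 h); split=> //; first exact: scattered_GL_equiv f_equiv_h' f_scattered.
apply: (standard_form_of_frob_eq (a := B 0 0) lamNq) => i.
rewrite /drop_coef0; case: (eqVneq i i0) => [->|ii0 hi]; first by rewrite eqxx.
have /eqP := Umaps_triangular_coef hB B10 ii0.
by rewrite B11 mulf_eq0 (negbTE hi) subr_eq0 => /eqP.
Qed.

End Stabilizer.

Lemma Gcirc_iso_Fq_scalar f :
  (forall A, A \in Gset q f -> exists2 mu, in_Fq q mu & A = mu%:M) -> Gcirc_iso_Fq q f.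
Proof.
move=> Gscalar.
have Gc_scalar A : A \in Gcirc q f -> exists2 mu, in_Fq q mu & A = mu%:M.
  case/setU1P => [->|/Gscalar //]; exists 0; last by rewrite raddf0.
  by rewrite /in_Fq -[q]expn1 frob0.
exists (fun A => A 0 0); split.
- by move=> A B _ _; rewrite mxE.
- by move=> A B /Gc_scalar [mu _ ->] /Gc_scalar [nu _ ->]; rewrite -scalar_mxM !mxE.
- split=> [|A B /Gc_scalar [mu _ ->] /Gc_scalar [nu _ ->]]; first by rewrite mxE.
  by rewrite !mxE /= !mulr1n => ->.
- by move=> A /Gc_scalar [mu muq ->]; rewrite mxE.
move=> a aq; have [->|anz] := eqVneq a 0.
  by exists 0; [exact: setU11 | rewrite mxE].
exists a%:M; last by rewrite mxE eqxx mulr1n.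
have aunit : (a%:M : 'M[L]_2) \in unitmx by rewrite unitmxE unitfE det_scalar expf_neq0.
by apply/setU1P; right; rewrite inE aunit (Uact_Uset aunit (Umaps_scalar f aq)) eqxx.
Qed.

Lemma nonscalar_of_not_iso f : ~ Gcirc_iso_Fq q f ->
  exists2 A, A \in Gset q f & forall mu, in_Fq q mu -> A != mu%:M.
Proof.
move=> not_iso; case: (boolP [exists A in Gset q f, [forall mu, in_Fq q mu ==> (A != mu%:M)]]).
  by case/exists_inP => A AG /forallP Anscalar; exists A => // mu /(implyP (Anscalar mu)).
move/exists_inPn => scalar; case: not_iso; apply: Gcirc_iso_Fq_scalar => A /scalar.
by rewrite negb_forall => /existsP [mu]; rewrite negb_imply negbK => /andP [muq /eqP]; exists mu.
Qed.

Lemma standard_form_drop_coef0_n2 b : n = 2 -> standard_form (drop_coef0 b).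
Proof.
move=> n2; apply: (standard_form_of_dvdn n_gt1 (dvdnn n)) => i j; rewrite /drop_coef0.
have val1 (k : 'I_n) : k != i0 -> val k = 1%N.
  have := ltn_ord k; rewrite -val_eqE /= {2}n2; case: (val k) => [|[|]] //.
case: (eqVneq i i0) => [->|ii0]; first by rewrite mul0r eqxx.
case: (eqVneq j i0) => [->|ji0]; first by rewrite mulr0 eqxx.
by rewrite -val_eqE /= !val1.
Qed.

End QPolynomials.

Theorem corollary4p7 (L : finFieldType) (p k q n : nat)
  (hp : prime p) (hk : (0 < k)%N) (hq : q = (p ^ k)%N) (hn : (1 < n)%N)
  (hL : #|L| = (q ^ n)%N)
  (f : 'I_n -> L) :
  scattered q f -> ~ Gcirc_iso_Fq q f ->
  exists h : 'I_n -> L, [/\ scattered q h, standard_form h & GL_equiv q f h].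
Proof.
move=> f_scattered not_iso.
have q_pchar : [pchar L].-nat q.
  have pL : p \in [pchar L] by apply: (card_finPcharP (n := (k * n)%N)); rewrite // hL hq expnM.
  by rewrite hq pnatX (eq_pnat _ (pcharf_eq pL)) pnat_id.
have [n_le2|n_gt2] := leqP n 2.
  have n2 : n = 2 by apply/anti_leq; rewrite n_le2 hn.
  exists (drop_coef0 hn f); split; last exact: GL_equiv_drop_coef0.
    exact (scattered_GL_equiv q_pchar (GL_equiv_drop_coef0 q hn f) f_scattered).
  exact (standard_form_drop_coef0_n2 hn f n2).
have [A AG Anscalar] := nonscalar_of_not_iso hn hL not_iso.
exact (nonscalar_standard_form q_pchar hn hL f_scattered n_gt2 AG Anscalar).
Qed.
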